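(* Given a homogeneous basis $\{x^p\}$ of $H^\ast$ with respect to $H^\ast=H_i^\ast\oplus H_v^\ast\oplus H_g^\ast$, there is an isomorphism of vector spaces \[ \mathrm{Br}\llbracket H^\ast\rrbracket\cong k\llbracket x^p\rrbracket/\mathcal I, \] where $\mathcal I$ is the ideal generated by $\{x_v^px_g^q\}$ (products of a basis element of $H_v^\ast$ with a basis element of $H_g^\ast$).
   Context: $G=\mathbb{Z}/2\mathbb{Z}=\{e,g\}$, $k$ a field of characteristic zero. $(H,\rho)$ is a finite dimensional self-invariant $\mathbb{Z}/2\mathbb{Z}$-graded $\mathbb{Z}/2\mathbb{Z}$-module ($g$ acts trivially on $H_g$), so $H=H_i\oplus H_v\oplus H_g$ where $H_e=H_i\oplus H_v$, $g$ acts trivially on $H_i$ and by $-1$ on $H_v$; $H^G=H_i\oplus H_g$. $B_n$ acts on $H^{\otimes n}$ through the braiding $v\otimes w\mapsto(h\cdot w)\otimes v$ for $v\in H_h$, and $\mathrm{Br}\llbracket H^\ast\rrbracket=\prod_n\mathrm{Br}^nH^\ast$ with $\mathrm{Br}^nH^\ast$ the $B_n$-invariant $n$-linear forms. The isomorphism uses the identification of symmetric $n$-linear forms with homogeneous polynomials of degree $n$ (subscripts on $x^p$ indicate the summand $i,v,g$). *)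

From HB Require Import structures.
From mathcomp Require Import all_boot all_order all_algebra.
Set Implicit Arguments. Unset Strict Implicit. Unset Printing Implicit Defensive.
Import GRing.Theory.
Local Open Scope ring_scope.

Definition Hsp (k : fieldType) (Hi Hv Hg : vectType k) : lmodType k :=
  ((Hi * Hv) * Hg)%type.

Section Braided.
Variables (k : fieldType) (Hi Hv Hg : vectType k).
Local Notation H := (Hsp Hi Hv Hg).

Definition epart (u : H) : H := ((u.1.1, u.1.2), 0).
Definition gpart (u : H) : H := ((0, 0), u.2).
Definition gact (u : H) : H := ((u.1.1, - u.1.2), u.2).

(* value of v at position m (0 if out of range) *)
Definition vat n (v : 'I_n -> H) (m : nat) : H :=
  if (insub m : option 'I_n) is Some j then v j else 0.

Definition upd n (v : 'I_n -> H) (i : 'I_n) (x : H) : 'I_n -> H :=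
  fun j => if j == i then x else v j.

Definition brsw n (i : nat) (v : 'I_n -> H) (x y : H) : 'I_n -> H :=
  fun j => if val j == i then x else if val j == i.+1 then y else v j.

Definition multilinear n (f : ('I_n -> H) -> k) : Prop :=
  forall (i : 'I_n) (v : 'I_n -> H) (a : k) (u w : H),
    f (upd v i (a *: u + w)) = a * f (upd v i u) + f (upd v i w).

(* invariance under the generator sigma_i of B_n, which acts on
   ... (x) v_i (x) v_{i+1} (x) ... through the braiding
   v (x) w |-> (h . w) (x) v  for v in H_h, i.e.
   v (x) w |-> w (x) v_e + (g . w) (x) v_g. *)
Definition braid_inv n (f : ('I_n -> H) -> k) : Prop :=
  forall i : nat, (i.+1 < n)%N -> forall v : 'I_n -> H,
    f v = f (brsw i v (vat v i.+1) (epart (vat v i)))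
          + f (brsw i v (gact (vat v i.+1)) (gpart (vat v i))).

Definition BrN n (f : ('I_n -> H) -> k) : Prop := multilinear f /\ braid_inv f.

End Braided.

(* variables x^p : indexed by I_a (basis of dual H_i), I_b (dual H_v), I_c (dual H_g) *)
Definition var (a b c : nat) : finType := (('I_a + 'I_b) + 'I_c)%type.
Definition xv {a b c : nat} (j : 'I_b) : var a b c := inl (inr j).
Definition xg {a b c : nat} (l : 'I_c) : var a b c := inr l.

(* formal power series k[[x^p]] : functions from monomials (exponent vectors) to k *)
Definition mon (V : finType) := {ffun V -> nat}.
Definition series (V : finType) (k : fieldType) := mon V -> k.

Definition mon2 (V : finType) (p q : V) : mon V := [ffun t => ((t == p) + (t == q))%N].

(* product of the monomial x^u with a power series s *)
Definition mulX (V : finType) (k : fieldType) (u : mon V) (s : series V k) : series V k :=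
  fun m => if [forall t, u t <= m t]%N then s [ffun t => (m t - u t)%N] else 0.

Definition in_ideal (k : fieldType) (a b c : nat) (s : series (var a b c) k) : Prop :=
  exists h : 'I_b -> 'I_c -> series (var a b c) k,
    forall m, s m = \sum_(j < b) \sum_(l < c) mulX (mon2 (xv j) (xg l)) (h j l) m.

From HB Require Import structures.
From mathcomp Require Import all_boot all_order all_algebra perm ring.
From Stdlib Require Import FunctionalExtensionality.
Set Implicit Arguments. Unset Strict Implicit. Unset Printing Implicit Defensive.
Import GRing.Theory.
Local Open Scope ring_scope.

(* A multilinear form on H^n is determined by its values on n-tuples of basis
   vectors e_p dual to the x^p.  Invariance under sigma_i swaps two adjacent
   basis vectors, with a sign -1 exactly when an H_g-vector passes an
   H_v-vector (g acts by -1 on H_v), so these values only depend on the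
   monomial x^(p_1) ... x^(p_n); if that monomial contains both an x_v and an
   x_g, moving the pair past each other twice gives t = -t, hence t = 0 since
   2 is invertible.  Conversely the coefficients of any series on the
   monomials outside I define, by symmetrisation, a braid-invariant form. *)

Section DualBasis.
Variables (k : fieldType) (V : vectType k) (a : nat) (bb : a.-tuple 'Hom(V, k^o)).
Hypothesis bbB : basis_of fullv bb.

Lemma dual_basis_sep (u : V) : (forall q, tnth bb q u = 0) -> u = 0.
Proof.
move=> bb_u0.
have f_u0 (f : 'Hom(V, k^o)) : f u = 0.
  rewrite (coord_basis bbB (memvf f)) sum_lfunE big1 // => i _.
  by rewrite scale_lfunE -(tnth_nth 0 bb i) bb_u0 scaler0.
rewrite (coord_vbasis (memvf u)) big1 // => i _.
have := f_u0 (linfun (coord (vbasis {:V}) i : {linear V -> k^o})).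
by rewrite lfunE => ->; rewrite scale0r.
Qed.

Definition dual_coords (u : V) : 'rV[k]_a := \row_q (tnth bb q u : k).
Fact dual_coords_is_linear : linear dual_coords.
Proof. by move=> r x y; apply/rowP => q; rewrite !mxE linearP. Qed.
HB.instance Definition _ := GRing.isSemilinear.Build k V 'rV[k]_a _ dual_coords
  (GRing.semilinear_linear dual_coords_is_linear).

(* [dual_coords] is injective between spaces of the same dimension a. *)
Lemma predual_basis_exists :
  exists ub : 'I_a -> V, forall q p, tnth bb q (ub p) = (q == p)%:R.
Proof.
pose Psi : 'Hom(V, 'rV[k]_a) := linfun dual_coords.
have Psi_inj : lker Psi == 0%VS.
  apply/lker0P => x y; rewrite !lfunE /= => Exy.
  apply/eqP; rewrite -subr_eq0; apply/eqP/dual_basis_sep => q.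
  have := congr1 (fun M : 'rV_a => M 0 q) Exy; rewrite /= !mxE => Eq.
  by rewrite linearB /= Eq subrr.
have dimV : \dim {:V} = a.
  have := size_basis bbB; rewrite !dimvf => <-; exact: esym (muln1 _).
have Psi_onto : limg Psi = fullv.
  apply/eqP; rewrite eqEdim subvf limg_dim_eq; last by rewrite (eqP Psi_inj) capv0.
  by rewrite dimV dimvf; change (1 * a <= a)%N; rewrite mul1n.
have preimage p : exists u : V, Psi u = delta_mx 0 p.
  have : (delta_mx 0 p : 'rV[k]_a) \in limg Psi by rewrite Psi_onto memvf.
  by case/memv_imgP => u _ ->; exists u.
have [ub Eub] := fin_all_exists preimage.
exists ub => q p; have := congr1 (fun M : 'rV_a => M 0 q) (Eub p).
by rewrite /= lfunE /= !mxE eq_sym.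
Qed.

End DualBasis.

Section Monomials.
Variable T : finType.

Definition mon_of_seq (l : seq T) : mon T := [ffun p => count_mem p l].
Definition seq_of_mon (m : mon T) : seq T := flatten [seq nseq (m p) p | p <- enum T].

Lemma seq_of_monK (m : mon T) : mon_of_seq (seq_of_mon m) = m.
Proof.
apply/ffunP => q; rewrite ffunE count_flatten -map_comp.
rewrite (eq_map (fun p => count_nseq (pred1 q) (m p) p)) sumnE big_map big_enum /=.
rewrite (bigD1 q) //= eqxx mul1n big1 ?addn0 // => p /negbTE.
by rewrite eq_sym => ->.
Qed.

Lemma eq_mon_of_seq (l1 l2 : seq T) : mon_of_seq l1 = mon_of_seq l2 <-> perm_eq l1 l2.
Proof.
split=> [/ffunP E | /seq.permP E]; last by apply/ffunP => p; rewrite !ffunE E.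
by apply/allP => p _; apply/eqP; have := E p; rewrite !ffunE.
Qed.

Lemma perm_codom_perm (U : eqType) (w : {ffun T -> U}) (s : {perm T}) :
  perm_eq (codom [ffun j => w (s j)]) (codom w).
Proof.
rewrite !codomE -(eq_map (fun j => esym (ffunE _ j))) map_comp.
apply: perm_map; apply: uniq_perm.
- by rewrite (map_inj_uniq (@perm_inj _ s)) enum_uniq.
- exact: enum_uniq.
by move=> j; rewrite -{1}(permKV s j) (mem_map (@perm_inj _ s)) !mem_enum.
Qed.

Lemma codom_in_tuple (U : eqType) (l : seq U) :
  codom [ffun j : 'I_(size l) => tnth (in_tuple l) j] = l.
Proof.
rewrite codomE -[RHS](map_tnth_enum (in_tuple l)).
by apply: eq_map => j; rewrite ffunE.
Qed.

End Monomials.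

Section Ideal.
Variables (k : fieldType) (a b c : nat).
Local Notation V := (var a b c).

Definition isv (p : V) : bool := if p is inl (inr _) then true else false.
Definition isg (p : V) : bool := if p is inr _ then true else false.

Lemma isv_isg p : isv p -> isg p = false.
Proof. by case: p => [[]|]. Qed.

Definition mixed (m : mon V) : bool :=
  [exists jl : 'I_b * 'I_c, (0 < m (xv jl.1)) && (0 < m (xg jl.2))]%N.

Lemma mixed_mon_of_seq (l : seq V) : mixed (mon_of_seq l) = has isv l && has isg l.
Proof.
have count_gt0 p : (0 < mon_of_seq l p)%N = (p \in l) by rewrite ffunE -has_count has_pred1.
apply/existsP/andP => [[[j l0]] /andP[] | [/hasP[[[//|j]|//] vl _] /hasP[[//|l0] gl _]]].
  by rewrite !count_gt0 => vl gl; split; apply/hasP; [exists (xv j) | exists (xg l0)].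
by exists (j, l0); rewrite /= !count_gt0 vl gl.
Qed.

Definition unmixed (s : series V k) (m : mon V) : k := if mixed m then 0 else s m.

Lemma mon2_le j l (m : mon V) :
  [forall t, mon2 (xv j) (xg l) t <= m t]%N = (0 < m (xv j))%N && (0 < m (xg l))%N.
Proof.
apply/forallP/andP => [le_m | [vm gm] t].
  by move: (le_m (xv j)) (le_m (xg l)); rewrite !ffunE !eqxx.
by rewrite ffunE; case: eqVneq => [->|_] //=; case: eqVneq => [->|].
Qed.

Definition mixed_witness (m : mon V) : option ('I_b * 'I_c) :=
  [pick jl | (0 < m (xv jl.1)) && (0 < m (xg jl.2))]%N.

(* Each mixed monomial is attributed to the single generator chosen by
   [mixed_witness], so the cofactors below recover s exactly. *)
Definition ideal_cofactor (s : series V k) j l (m : mon V) : k :=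
  let m' := [ffun t => (m t + mon2 (xv j) (xg l) t)%N] in
  if mixed_witness m' == Some (j, l) then s m' else 0.

Lemma mulX_ideal_cofactor s j l m :
  mulX (mon2 (xv j) (xg l)) (ideal_cofactor s j l) m =
  if mixed_witness m == Some (j, l) then s m else 0.
Proof.
rewrite /mulX /ideal_cofactor; case: ifP => [le_m | /negbT].
  suff -> : [ffun t => ([ffun t0 => m t0 - mon2 (xv j) (xg l) t0] t
                        + mon2 (xv j) (xg l) t)%N] = m by [].
  apply/ffunP => t; rewrite !ffunE subnK //.
  by move/forallP: le_m => /(_ t); rewrite ffunE.
rewrite mon2_le /mixed_witness; case: pickP => [[j' l'] + /negbTE|//].
by case: eqP => // -[-> ->] ->.
Qed.

Lemma in_idealP (s : series V k) : in_ideal s <-> (forall m, ~~ mixed m -> s m = 0).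
Proof.
split=> [[h Es] m unmixed_m | s_unmixed0].
  rewrite Es big1 // => j _; rewrite big1 // => l _.
  rewrite /mulX mon2_le; case: ifP => // mixed_jl.
  by case/negP: unmixed_m; apply/existsP; exists (j, l).
exists (ideal_cofactor s) => m.
under eq_bigr => j _ do under eq_bigr => l _ do rewrite mulX_ideal_cofactor.
rewrite pair_bigA /=; case Ew: (mixed_witness m) => [[j0 l0]|].
  rewrite (bigD1 (j0, l0)) //= eqxx big1 ?addr0 // => -[j l] /= ne.
  by case: eqP => // -[e1 e2]; rewrite e1 e2 eqxx in ne.
rewrite big1 => [|[j l] _] //; apply: s_unmixed0; apply/existsP => -[jl mixed_jl].
by move: Ew; rewrite /mixed_witness; case: pickP => // /(_ jl); rewrite mixed_jl.
Qed.

End Ideal.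

Lemma nth_swap (T : Type) (d : T) pre x y post j :
  nth d (pre ++ y :: x :: post) j =
  if j == size pre then y else if j == (size pre).+1 then x
  else nth d (pre ++ x :: y :: post) j.
Proof.
rewrite !nth_cat; case: (ltngtP j (size pre)) => [lt_j|gt_j|->]; last by rewrite subnn.
  by rewrite (ltn_eqF (ltn_trans lt_j (ltnSn _))).
case: eqP => [->|ne_j]; first by rewrite subSnn.
have : (1 < j - size pre)%N.
  by rewrite ltn_subRL addn1 ltn_neqAle eq_sym gt_j andbT; apply/eqP.
by case: (j - size pre)%N => [|[|d']].
Qed.

Section Braided.
Variables (k : fieldType) (Hi Hv Hg : vectType k) (a b c : nat)
  (bi : a.-tuple 'Hom(Hi, k^o)) (bv : b.-tuple 'Hom(Hv, k^o))
  (bg : c.-tuple 'Hom(Hg, k^o)).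
Hypotheses (bi_basis : basis_of fullv bi) (bv_basis : basis_of fullv bv)
  (bg_basis : basis_of fullv bg).
Local Notation H := (Hsp Hi Hv Hg).
Local Notation V := (var a b c).

Definition coordx (p : V) (u : H) : k :=
  match p with
  | inl (inl i) => tnth bi i u.1.1
  | inl (inr j) => tnth bv j u.1.2
  | inr l => tnth bg l u.2
  end.

Lemma coordxP p r u w : coordx p (r *: u + w) = r * coordx p u + coordx p w.
Proof. by case: p => [[i|j]|l] /=; rewrite linearP. Qed.

Lemma coordxB p u w : coordx p (u - w) = coordx p u - coordx p w.
Proof. by case: p => [[i|j]|l] /=; rewrite linearB. Qed.

Lemma coordx_lincomb p (I : finType) (r : I -> k) (g : I -> H) :
  coordx p (\sum_i r i *: g i) = \sum_i r i * coordx p (g i).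
Proof.
elim/big_rec2: _ => [|i x y _ <-]; last exact: coordxP.
by case: p => [[i|j]|l] /=; rewrite linear0.
Qed.

Lemma coordx_inj (u w : H) : (forall p, coordx p u = coordx p w) -> u = w.
Proof.
move=> Euw; apply/eqP; rewrite -subr_eq0; apply/eqP.
have : forall p, coordx p (u - w) = 0 by move=> p; rewrite coordxB Euw subrr.
case: (u - w) => [[x y] z] E0.
have -> : x = 0 by apply: (dual_basis_sep bi_basis) => i; exact: E0 (inl (inl i)).
have -> : y = 0 by apply: (dual_basis_sep bv_basis) => j; exact: E0 (inl (inr j)).
by have -> : z = 0 by apply: (dual_basis_sep bg_basis) => l; exact: E0 (inr l).
Qed.

Lemma coordx_epart p u : coordx p (epart u) = if isg p then 0 else coordx p u.
Proof. by case: p => [[i|j]|l] /=; rewrite ?linear0. Qed.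

Lemma coordx_gpart p u : coordx p (gpart u) = if isg p then coordx p u else 0.
Proof. by case: p => [[i|j]|l] /=; rewrite ?linear0. Qed.

Lemma coordx_gact p u : coordx p (gact u) = if isv p then - coordx p u else coordx p u.
Proof. by case: p => [[i|j]|l] /=; rewrite ?linearN. Qed.

Variables (Ui : 'I_a -> Hi) (Uv : 'I_b -> Hv) (Ug : 'I_c -> Hg).
Hypotheses (bi_Ui : forall q p, tnth bi q (Ui p) = (q == p)%:R)
  (bv_Uv : forall q p, tnth bv q (Uv p) = (q == p)%:R)
  (bg_Ug : forall q p, tnth bg q (Ug p) = (q == p)%:R).

Definition basisx (p : V) : H :=
  match p with
  | inl (inl i) => ((Ui i, 0), 0)
  | inl (inr j) => ((0, Uv j), 0)
  | inr l => ((0, 0), Ug l)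
  end.

Lemma coordx_basisx q p : coordx q (basisx p) = (q == p)%:R.
Proof.
by case: q => [[i|j]|l]; case: p => [[i'|j']|l'] /=; rewrite ?linear0 ?bi_Ui ?bv_Uv ?bg_Ug.
Qed.

Lemma basisx_expand (u : H) : u = \sum_p coordx p u *: basisx p.
Proof.
apply: coordx_inj => q; rewrite coordx_lincomb (bigD1 q) //= big1 => [|p /negbTE ne_pq].
  by rewrite coordx_basisx eqxx addr0 mulr1.
by rewrite coordx_basisx eq_sym ne_pq mulr0.
Qed.

Lemma epart_basisx p : epart (basisx p) = if isg p then 0 else basisx p.
Proof. by case: p => [[i|j]|l]. Qed.

Lemma gpart_basisx p : gpart (basisx p) = if isg p then basisx p else 0.
Proof. by case: p => [[i|j]|l]. Qed.

Lemma gact_basisx p : gact (basisx p) = if isv p then - basisx p else basisx p.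
Proof.
case: p => [[i|j]|l] //=; rewrite /gact /= ?oppr0 //.
by rewrite -[RHS]/((- 0, - Uv j), - 0) !oppr0.
Qed.

Lemma upd_id n (v : 'I_n -> H) i : upd v i (v i) = v.
Proof. by apply: functional_extensionality => j; rewrite /upd; case: eqP => [->|]. Qed.

Lemma vat_ord n (v : 'I_n -> H) (j : 'I_n) : vat v j = v j.
Proof. by rewrite /vat valK. Qed.

Lemma brsw_updl n i (i0 : 'I_n) (v : 'I_n -> H) x y :
  val i0 = i -> brsw i v x y = upd (brsw i v 0 y) i0 x.
Proof.
move=> <-; apply: functional_extensionality => j.
by rewrite /upd /brsw -val_eqE; case: eqP.
Qed.

Lemma brsw_updr n i (i1 : 'I_n) (v : 'I_n -> H) x y :
  val i1 = i.+1 -> brsw i v x y = upd (brsw i v x 0) i1 y.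
Proof.
move=> Ei1; apply: functional_extensionality => j; rewrite /upd /brsw -val_eqE Ei1.
case: eqVneq => [->|_]; first by rewrite eqn_leq ltnn andbF.
by case: ifP.
Qed.

Section Multilinear.
Variables (n : nat) (f : ('I_n -> H) -> k).
Hypothesis f_ml : multilinear f.

Lemma mlin0 v i : f (upd v i 0) = 0.
Proof.
have := f_ml i v 1 0 0; rewrite scaler0 addr0 mul1r.
by rewrite -{1}(addr0 (f _)) => /addrI <-.
Qed.

Lemma mlinN v i u : f (upd v i (- u)) = - f (upd v i u).
Proof. by have := f_ml i v (-1) u 0; rewrite addr0 scaleN1r mlin0 addr0 mulN1r. Qed.

Lemma mlin_sum (I : finType) (r : I -> k) (g : I -> H) v i :
  f (upd v i (\sum_p r p *: g p)) = \sum_p r p * f (upd v i (g p)).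
Proof. by elim/big_rec2: _ => [|p x y _ <-]; [exact: mlin0 | exact: f_ml]. Qed.

Lemma mlin_brsw0r i v x : (i.+1 < n)%N -> f (brsw i v x 0) = 0.
Proof.
move=> lt_i_n; have Ei1 : val (Ordinal lt_i_n) = i.+1 by [].
by rewrite (brsw_updr _ _ _ Ei1) mlin0.
Qed.

Lemma mlin_brswNl i v x y : (i.+1 < n)%N -> f (brsw i v (- x) y) = - f (brsw i v x y).
Proof.
move=> lt_i_n; have Ei0 : val (Ordinal (ltnW lt_i_n)) = i by [].
by rewrite (brsw_updl v (- x) y Ei0) (brsw_updl v x y Ei0) mlinN.
Qed.

(* Induction on t: positions >= t already hold basis vectors; expand position t. *)
Lemma mlin_eq0 : (forall w : 'I_n -> V, f (fun j => basisx (w j)) = 0) -> forall v, f v = 0.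
Proof.
move=> f_basis0.
suff f_eq0 t v : (forall j : 'I_n, t <= j -> exists p, v j = basisx p)%N -> f v = 0.
  by move=> v; apply: (f_eq0 n) => j; rewrite leqNgt ltn_ord.
elim: t v => [|t IHt] v v_basis.
  have [w Ew] := fin_all_exists (fun j => v_basis j (leq0n _)).
  by rewrite (functional_extensionality _ _ Ew) f_basis0.
have [lt_t_n | le_n_t] := ltnP t n; last first.
  by apply: IHt => j; rewrite leqNgt (leq_trans (ltn_ord j) le_n_t).
pose i := Ordinal lt_t_n.
rewrite -(upd_id v i) (basisx_expand (v i)) mlin_sum big1 // => p _.
rewrite IHt ?mulr0 // => j le_t_j; rewrite /upd.
have [_|ne_ji] := eqVneq j i; first by exists p.
apply: v_basis; rewrite ltn_neqAle le_t_j andbT.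
by apply: contra_neq ne_ji => Etj; apply: val_inj.
Qed.

End Multilinear.

Lemma braid_inv_swap_basisx n (f : ('I_n -> H) -> k) i v x y :
  BrN f -> (i.+1 < n)%N -> vat v i = basisx x -> vat v i.+1 = basisx y ->
  f v = (if isg x && isv y then -1 else 1) * f (brsw i v (basisx y) (basisx x)).
Proof.
move=> [f_ml f_br] lt_i_n vi vi1.
rewrite (f_br i lt_i_n) vi vi1 epart_basisx gpart_basisx gact_basisx.
by case: (isg x); case: (isv y);
  rewrite /= ?(mlin_brsw0r f_ml) ?(mlin_brswNl f_ml) ?addr0 ?add0r ?mul1r ?mulN1r.
Qed.

Definition brphi (s : series V k) n (v : 'I_n -> H) : k :=
  \sum_(w : {ffun 'I_n -> V}) unmixed s (mon_of_seq (codom w)) * \prod_j coordx (w j) (v j).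
Arguments brphi s n v : clear implicits.

Lemma brphiD r s t n v :
  brphi (fun m => r * s m + t m) n v = r * brphi s n v + brphi t n v.
Proof.
rewrite /brphi mulr_sumr -big_split; apply: eq_bigr => w _ /=.
by rewrite /unmixed; case: ifP => _; ring.
Qed.

Lemma prod_upd n (G : 'I_n -> H -> k) v i x :
  \prod_j G j (upd v i x j) = G i x * \prod_(j | j != i) G j (v j).
Proof.
rewrite (bigD1 i) //= /upd eqxx; congr (_ * _).
by apply: eq_bigr => j /negbTE ->.
Qed.

Lemma brphi_multilinear s n : multilinear (brphi s n).
Proof.
move=> i v r u w; rewrite /brphi mulr_sumr -big_split; apply: eq_bigr => w' _ /=.
by rewrite !(prod_upd (fun j => coordx (w' j))) coordxP; ring.
Qed.

Lemma prod_split2 n (F : 'I_n -> k) i0 i1 : i0 != i1 ->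
  \prod_j F j = F i0 * F i1 * \prod_(j | (j != i0) && (j != i1)) F j.
Proof.
move=> ne01; rewrite (bigD1 i0) // (bigD1 i1) 1?eq_sym //= mulrA.
by congr (_ * _); apply: eq_bigl => j; rewrite andbC.
Qed.

Lemma prod_brsw_tperm n (G : V -> H -> k) (w : 'I_n -> V) i (i0 i1 : 'I_n) v x y :
  val i0 = i -> val i1 = i.+1 ->
  \prod_j G (w (tperm i0 i1 j)) (brsw i v x y j) =
  G (w i1) x * G (w i0) y * \prod_(j | (j != i0) && (j != i1)) G (w j) (v j).
Proof.
move=> Ei0 Ei1; have ne01 : i0 != i1 by rewrite -val_eqE Ei0 Ei1 neq_ltn ltnSn.
rewrite (prod_split2 _ ne01) tpermL tpermR /brsw Ei0 Ei1 eqxx (gtn_eqF (ltnSn i)) eqxx.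
congr (_ * _); apply: eq_bigr => j /andP[ne0 ne1].
rewrite tpermD 1?[_ == j]eq_sym // -Ei1 -Ei0 !val_eqE.
by rewrite (negbTE ne0) (negbTE ne1).
Qed.

Lemma brphi_braid_inv s n : braid_inv (brphi s n).
Proof.
move=> i lt_i_n v.
pose i0 : 'I_n := Ordinal (ltnW lt_i_n); pose i1 : 'I_n := Ordinal lt_i_n.
have Ei0 : val i0 = i by []; have Ei1 : val i1 = i.+1 by [].
have -> : vat v i = v i0 by rewrite -Ei0 vat_ord.
have -> : vat v i.+1 = v i1 by rewrite -Ei1 vat_ord.
pose sw (w : {ffun 'I_n -> V}) := [ffun j => w (tperm i0 i1 j)].
have swK : involutive sw by move=> w; apply/ffunP => j; rewrite !ffunE tpermK.
rewrite /brphi [in X in _ = X + _](reindex_inj (inv_inj swK)).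
rewrite [in X in _ = _ + X](reindex_inj (inv_inj swK)) -big_split.
apply: eq_bigr => w _ /=.
pose R := \prod_(j | (j != i0) && (j != i1)) coordx (w j) (v j).
have sw_prod x y : \prod_j coordx (sw w j) (brsw i v x y j) =
    coordx (w i1) x * coordx (w i0) y * R.
  by rewrite -(prod_brsw_tperm coordx w v x y Ei0 Ei1); apply: eq_bigr => j _; rewrite ffunE.
have prod_w : \prod_j coordx (w j) (v j) = coordx (w i0) (v i0) * coordx (w i1) (v i1) * R.
  by apply: prod_split2; rewrite -val_eqE Ei0 Ei1 neq_ltn ltnSn.
have -> : mon_of_seq (codom (sw w)) = mon_of_seq (codom w).
  exact/eq_mon_of_seq/perm_codom_perm.
rewrite !sw_prod prod_w !coordx_epart coordx_gpart coordx_gact.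
case gw0: (isg (w i0)); case vw1: (isv (w i1)); rewrite /=; try ring.
suff mixed_w : mixed (mon_of_seq (codom w)) by rewrite /unmixed mixed_w; ring.
rewrite mixed_mon_of_seq; apply/andP; split; apply/hasP.
  by exists (w i1); rewrite ?codom_f.
by exists (w i0); rewrite ?codom_f.
Qed.

Lemma brphi_basisx s n (w : {ffun 'I_n -> V}) :
  brphi s n (fun j => basisx (w j)) = unmixed s (mon_of_seq (codom w)).
Proof.
rewrite /brphi (bigD1 w) //= [X in _ + X]big1 ?addr0 => [|w' ne_w'w].
  by rewrite big1 ?mulr1 // => j _; rewrite coordx_basisx eqxx.
have [j ne_j] : exists j, w' j != w j.
  by apply/existsP; apply: contraR ne_w'w => /existsPn E; apply/eqP/ffunP => j; apply/eqP/negPn.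
by rewrite (bigD1 j) //= coordx_basisx (negbTE ne_j) mul0r mulr0.
Qed.

Lemma brphi_eq0P s : (forall n v, brphi s n v = 0) <-> (forall m, ~~ mixed m -> s m = 0).
Proof.
split=> [brphi_s0 m unmixed_m | s_unmixed0 n v].
  pose w := [ffun j => tnth (in_tuple (seq_of_mon m)) j].
  have := brphi_s0 _ (fun j => basisx (w j)).
  by rewrite brphi_basisx codom_in_tuple seq_of_monK /unmixed (negbTE unmixed_m).
rewrite /brphi big1 // => w _; rewrite /unmixed.
by case: ifP => [_|/negbT/s_unmixed0 ->]; rewrite mul0r.
Qed.

Section Onto.
Variable F : forall n, ('I_n -> H) -> k.
Arguments F : clear implicits.
Hypothesis F_br : forall n, BrN (F n).
Hypothesis two_neq0 : (2%:R : k) != 0.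

Definition Fseq (l : seq V) : k := F (size l) (fun j => basisx (tnth (in_tuple l) j)).

Lemma F_cast n1 n2 (e : n1 = n2) (v1 : 'I_n1 -> H) v2 :
  (forall j, v1 j = v2 (cast_ord e j)) -> F n1 v1 = F n2 v2.
Proof.
case: n2 / e v2 => v2 Ev; congr (F _ _).
by apply: functional_extensionality => j; rewrite Ev cast_ord_id.
Qed.

Lemma F_codom n (w : {ffun 'I_n -> V}) : F n (fun j => basisx (w j)) = Fseq (codom w).
Proof.
have e : size (codom w) = n by rewrite size_codom card_ord.
symmetry; rewrite /Fseq; apply: (F_cast (e := e)) => j; congr basisx.
have nth_codom (i : 'I_n) : nth (w i) (codom w) i = w i.
  by rewrite codomE (nth_map i) ?size_enum_ord // nth_ord_enum.
by rewrite (tnth_nth (w (cast_ord e j))); exact: nth_codom.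
Qed.

Lemma Fseq_swap_sign pre x y post :
  Fseq (pre ++ x :: y :: post) =
  (if isg x && isv y then -1 else 1) * Fseq (pre ++ y :: x :: post).
Proof.
set l := pre ++ x :: y :: post; pose v j := basisx (tnth (in_tuple l) j).
have lt_i_l : ((size pre).+1 < size l)%N by rewrite size_cat /= !addnS !ltnS leq_addr.
have vat_l m (lt_m : (m < size l)%N) : vat v m = basisx (nth x l m).
  by rewrite -[m]/(val (Ordinal lt_m)) vat_ord /v (tnth_nth x).
rewrite /Fseq -/v.
rewrite (braid_inv_swap_basisx (F_br _) lt_i_l (vat_l _ (ltnW lt_i_l)) (vat_l _ lt_i_l)).
rewrite /l !nth_cat ltnn ltnNge leqnSn subnn subSnn /=; congr (_ * _).
have e : size l = size (pre ++ y :: x :: post) by rewrite !size_cat.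
apply: (F_cast (e := e)) => j; rewrite /brsw /v (tnth_nth x) (tnth_nth x) /= nth_swap.
by case: ifP => //; case: ifP.
Qed.

Lemma Fseq_gv_eq0 pre x y post : isg x -> isv y -> Fseq (pre ++ x :: y :: post) = 0.
Proof.
move=> gx vy; set t := Fseq _.
have t_opp : t = - t.
  by rewrite {1}/t Fseq_swap_sign gx vy Fseq_swap_sign (isv_isg vy) mulN1r mul1r.
have : 2%:R * t == 0 by rewrite mulr_natl mulr2n {2}t_opp subrr.
by rewrite mulf_eq0 (negbTE two_neq0) => /eqP.
Qed.

Lemma Fseq_swap pre x y post : Fseq (pre ++ x :: y :: post) = Fseq (pre ++ y :: x :: post).
Proof.
case gv: (isg x && isv y); last by rewrite Fseq_swap_sign gv mul1r.
case/andP: gv => gx vy; rewrite Fseq_gv_eq0 //.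
by rewrite Fseq_swap_sign (isv_isg vy) mul1r Fseq_gv_eq0.
Qed.

Lemma Fseq_bubble pre s x t : Fseq (pre ++ s ++ x :: t) = Fseq (pre ++ x :: s ++ t).
Proof.
elim: s pre => [|z s IHs] pre //=.
by rewrite -[pre ++ z :: _]/(pre ++ [:: z] ++ _) catA IHs -catA /= Fseq_swap.
Qed.

Lemma Fseq_perm l1 l2 : perm_eq l1 l2 -> Fseq l1 = Fseq l2.
Proof.
suff Fseq_perm_cat pre : perm_eq l1 l2 -> Fseq (pre ++ l1) = Fseq (pre ++ l2).
  exact: (Fseq_perm_cat [::]).
elim: l1 l2 pre => [|x l1 IHl1] l2 pre eq_l12.
  by rewrite perm_sym in eq_l12; move/perm_nilP: eq_l12 => ->.
have x_l2 : x \in l2 by rewrite -(perm_mem eq_l12) mem_head.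
case/splitPr: x_l2 eq_l12 => p1 p2 eq_l12.
have eq_l1p : perm_eq l1 (p1 ++ p2).
  by rewrite -(perm_cons x); apply: perm_trans eq_l12 _; rewrite (perm_catCA p1 [:: x] p2).
by rewrite -[pre ++ x :: l1]/(pre ++ [:: x] ++ l1) catA (IHl1 _ _ eq_l1p) -catA /= Fseq_bubble.
Qed.

Lemma Fseq_mixed l : mixed (mon_of_seq l) -> Fseq l = 0.
Proof.
rewrite mixed_mon_of_seq => /andP[/hasP[y yl vy] /hasP[x xl gx]].
have y_rem : y \in rem x l.
  move: yl; rewrite (perm_mem (perm_to_rem xl)) inE => /orP[/eqP Eyx|//].
  by move: gx; rewrite -Eyx (isv_isg vy).
have P : perm_eq l (x :: y :: rem y (rem x l)).
  by apply: perm_trans (perm_to_rem xl) _; rewrite perm_cons perm_to_rem.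
by rewrite (Fseq_perm P); apply: (Fseq_gv_eq0 [::]).
Qed.

Definition brseries : series V k := fun m => Fseq (seq_of_mon m).

Lemma brphi_brseries n v : brphi brseries n v = F n v.
Proof.
have [F_ml _] := F_br n.
apply/eqP; rewrite eq_sym -subr_eq0; apply/eqP; move: v.
apply: (mlin_eq0 (f := fun v => F n v - brphi brseries n v)).
  by move=> i v r u w; rewrite F_ml brphi_multilinear; ring.
move=> w; have -> : (fun j => basisx (w j)) = (fun j => basisx (finfun w j)).
  by apply: functional_extensionality => j; rewrite ffunE.
rewrite F_codom brphi_basisx /unmixed.
case: ifP => [/Fseq_mixed -> |_]; first by rewrite subrr.
apply/eqP; rewrite subr_eq0; apply/eqP/Fseq_perm/eq_mon_of_seq.
by rewrite seq_of_monK.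
Qed.

End Onto.

End Braided.

Theorem proposition5p2 (k : fieldType) (chark0 : [pchar k] =i pred0)
  (Hi Hv Hg : vectType k) (a b c : nat)
  (bi : a.-tuple 'Hom(Hi, k^o)) (bv : b.-tuple 'Hom(Hv, k^o))
  (bg : c.-tuple 'Hom(Hg, k^o))
  (bi_basis : basis_of fullv bi) (bv_basis : basis_of fullv bv)
  (bg_basis : basis_of fullv bg) :
  exists Phi : series (var a b c) k -> forall n : nat, ('I_n -> Hsp Hi Hv Hg) -> k,
    [/\ (* Phi is k-linear *)
        forall (r : k) (s t : series (var a b c) k) n v,
          Phi (fun m => r * s m + t m) n v = r * Phi s n v + Phi t n v,
        (* Phi lands in Br[[H^*]] = prod_n Br^n H^* *)
        forall s n, BrN (Phi s n),
        (* Phi is onto Br[[H^*]] *)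
        forall F : forall n : nat, ('I_n -> Hsp Hi Hv Hg) -> k,
          (forall n, BrN (F n)) ->
          exists s, forall n v, Phi s n v = F n v
      & (* the kernel of Phi is the ideal I *)
        forall s, (forall n v, Phi s n v = 0) <-> in_ideal s].
Proof.
have [Ui bi_Ui] := predual_basis_exists bi_basis.
have [Uv bv_Uv] := predual_basis_exists bv_basis.
have [Ug bg_Ug] := predual_basis_exists bg_basis.
have two_neq0 : (2%:R : k) != 0 by rewrite ((pcharf0P k).1 chark0).
exists (brphi bi bv bg); split.
- exact: brphiD.
- by move=> s n; split; [exact: brphi_multilinear | exact: brphi_braid_inv].
- move=> F F_br; exists (brseries Ui Uv Ug F) => n v.
  exact: (brphi_brseries bi_basis bv_basis bg_basis bi_Ui bv_Uv bg_Ug).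
- by move=> s; rewrite in_idealP; exact: brphi_eq0P bi_Ui bv_Uv bg_Ug s.
Qed.
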